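(* Let $\alpha_1,\dots,\alpha_K\in\mathbb R^d\setminus\{0\}$ and $\eta_1,\dots,\eta_J\in\mathbb R^d$, and let $\mathcal G=\{\sum_{j=1}^J\nu_j\eta_j:\nu_j\in[0,1],\sum_j\nu_j=1\}$. Writing $\pi(\eta)$ for the canonical projection of $\eta$ with respect to $\{\alpha_1,\dots,\alpha_K\}$, suppose $\|\pi(\eta_1)\|>\max_{j=2,\dots,J}\|\pi(\eta_j)\|$. Then $\eta_1$ is the unique maximizer of $\eta\mapsto\|\pi(\eta)\|$ over $\mathcal G$.
   Context: Canonical projection: for $\eta\ne0$, choose a (possibly empty) subset $\{\alpha_{k_1},\dots,\alpha_{k_m}\}$ of $\{\alpha_1,\dots,\alpha_K\}$, $\mathcal H_\eta$ its span, such that $P_{\mathcal H_\eta}\eta=\sum_p\gamma_{k_p}\alpha_{k_p}$ with all $\gamma_{k_p}\ge0$ and $\alpha_k^{T}P_{\mathcal H_\eta^\perp}\eta<0$ for all $k\notin\{k_1,\dots,k_m\}$; such a subset exists and $\pi(\eta):=P_{\mathcal H_\eta^\perp}\eta$ is uniquely determined and continuous in $\eta$ (set $\pi(0)=0$). $P$ denotes orthogonal projection. *)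

From HB Require Import structures.
From mathcomp Require Import all_boot all_order all_algebra.
From mathcomp Require Import boolp classical_sets reals.
Set Implicit Arguments. Unset Strict Implicit. Unset Printing Implicit Defensive.
Import Order.TTheory GRing.Theory Num.Theory.
Local Open Scope ring_scope.

Section Defs.
Variables (R : realType) (d : nat).
Notation vec := 'rV[R]_d.

Definition dotv (u v : vec) : R := (u *m v^T) 0 0.
Definition normv (u : vec) : R := Num.sqrt (dotv u u).

Definition is_orth_proj (K : nat) (a : 'I_K -> vec) (S : {set 'I_K})
    (eta h : vec) : Prop :=
  (exists c : 'I_K -> R, h = \sum_(k in S) c k *: a k) /\
  (forall k, k \in S -> dotv (a k) (eta - h) = 0).

(* p is P_{H_eta^perp} eta for an admissible subset S as in the definition of
   the canonical projection: P_{H} eta = sum_{k in S} gamma_k alpha_k with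
   gamma_k >= 0, and alpha_k^T P_{H^perp} eta < 0 for k not in S. *)
Definition is_canon_proj (K : nat) (alpha : 'I_K -> vec) (eta p : vec) : Prop :=
  exists (S : {set 'I_K}) (gamma : 'I_K -> R),
    (forall k, k \in S -> 0 <= gamma k) /\
    is_orth_proj alpha S eta (\sum_(k in S) gamma k *: alpha k) /\
    p = eta - \sum_(k in S) gamma k *: alpha k /\
    (forall k, k \notin S -> dotv (alpha k) p < 0).

(* The canonical projection pi(eta) (pi(0) = 0); for eta != 0 it is the
   (unique, by the paper) vector satisfying is_canon_proj, chosen classically. *)
Definition canon_proj (K : nat) (alpha : 'I_K -> vec) (eta : vec) : vec :=
  if eta == 0 then 0 else xget 0 [set p | is_canon_proj alpha eta p].

Definition in_hull (J : nat) (etas : 'I_J -> vec) (eta : vec) : Prop :=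
  exists nu : 'I_J -> R,
    (forall j, 0 <= nu j <= 1) /\ \sum_j nu j = 1 /\
    eta = \sum_j nu j *: etas j.
End Defs.

(* The defining conditions of the canonical projection are the KKT conditions
   for projecting eta onto the convex cone C generated by the alpha_k, so
   pi(eta) is the residual of that projection and ||pi(eta)|| = dist(eta, C).
   For eta = sum_j nu_j eta_j, the vector sum_j nu_j pi(eta_j) is again eta
   minus a point of C, hence
     ||pi(eta)||^2 <= ||sum_j nu_j pi(eta_j)||^2 <= sum_j nu_j ||pi(eta_j)||^2,
   which is < ||pi(eta_1)||^2 unless nu is concentrated on eta_1.
   Existence of the residual is proved by induction on the number of
   generators: the new generator is either already compatible with the old
   residual, or one solves the problem in its orthogonal complement. *)
From HB Require Import structures.
From mathcomp Require Import all_boot all_order all_algebra.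
From mathcomp Require Import boolp classical_sets reals.
From mathcomp Require Import lra.
Import Order.TTheory GRing.Theory Num.Theory.
Local Open Scope ring_scope.
Set Implicit Arguments. Unset Strict Implicit.

Lemma convex_comb_vertex (R : pzRingType) (V : lmodType R) n
    (nu : 'I_n -> R) (x : 'I_n -> V) j0 :
  (forall j, j != j0 -> nu j = 0) -> \sum_j nu j = 1 ->
  \sum_j nu j *: x j = x j0.
Proof.
move=> nu0 nu1; have nuj0 : nu j0 = 1.
  by rewrite -nu1 (bigD1 j0) //= big1 ?addr0 // => j /nu0.
by rewrite (bigD1 j0) //= nuj0 scale1r big1 ?addr0 // => j /nu0 ->; rewrite scale0r.
Qed.

Lemma convex_comb_lt (R : numDomainType) n (nu r : 'I_n -> R) j0 j :
  (forall i, 0 <= nu i) -> \sum_i nu i = 1 ->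
  (forall i, i != j0 -> r i < r j0) -> j != j0 -> nu j != 0 ->
  \sum_i nu i * r i < r j0.
Proof.
move=> nu0 nu1 r_lt jj0 nuj.
rewrite -subr_gt0 -[r j0]mul1r -nu1 mulr_suml -sumrB (bigD1 j) //=.
apply: ltr_pwDl.
  by rewrite -mulrBr mulr_gt0 ?subr_gt0 ?r_lt // lt_neqAle eq_sym nuj nu0.
apply: sumr_ge0 => i _; rewrite -mulrBr mulr_ge0 // subr_ge0.
by have [->|/r_lt/ltW] := eqVneq i j0.
Qed.

Lemma sumZ_subr_cone (R : pzRingType) (V : lmodType R) n K (nu : 'I_n -> R)
    (x : 'I_n -> V) (g : 'I_n -> 'I_K -> R) (al : 'I_K -> V) :
  \sum_i nu i *: (x i - \sum_k g i k *: al k) =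
  \sum_i nu i *: x i - \sum_k (\sum_i nu i * g i k) *: al k.
Proof.
under eq_bigr do rewrite scalerBr scaler_sumr.
rewrite sumrB exchange_big; congr (_ - _); apply: eq_bigr => k _.
by rewrite scaler_suml; apply: eq_bigr => i _; rewrite scalerA.
Qed.

Lemma forall_ord_recr n (P : 'I_n.+1 -> Prop) :
  (forall j : 'I_n, P (widen_ord (leqnSn n) j)) -> P ord_max -> forall k, P k.
Proof.
move=> Pw Pm k; have [kn|] := ltnP k n.
  by have -> : k = widen_ord (leqnSn n) (Ordinal kn) by apply: val_inj.
move=> nk; suff -> : k = ord_max by [].
by apply/val_inj/eqP; rewrite /= eqn_leq nk -ltnS ltn_ord.
Qed.

Section Dot.
Variables (R : realType) (d : nat).
Implicit Types (u v w x y : 'rV[R]_d) (c : R).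

Lemma dotvE u v : dotv u v = \sum_i u 0 i * v 0 i.
Proof. by rewrite /dotv !mxE; apply: eq_bigr => i _; rewrite mxE. Qed.

Lemma dotvC u v : dotv u v = dotv v u.
Proof. by rewrite !dotvE; apply: eq_bigr => i _; rewrite mulrC. Qed.

Lemma dotvDl u w v : dotv (u + w) v = dotv u v + dotv w v.
Proof. by rewrite !dotvE -big_split; apply: eq_bigr => i _; rewrite mxE mulrDl. Qed.

Lemma dotvZl c u v : dotv (c *: u) v = c * dotv u v.
Proof. by rewrite !dotvE mulr_sumr; apply: eq_bigr => i _; rewrite mxE mulrA. Qed.

Lemma dotv0l v : dotv 0 v = 0.
Proof. by rewrite -(scale0r 0) dotvZl mul0r. Qed.

Lemma dotvBl u w v : dotv (u - w) v = dotv u v - dotv w v.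
Proof. by rewrite dotvDl -scaleN1r dotvZl mulN1r. Qed.

Lemma dotvDr v u w : dotv v (u + w) = dotv v u + dotv v w.
Proof. by rewrite dotvC dotvDl !(dotvC v). Qed.

Lemma dotvBr v u w : dotv v (u - w) = dotv v u - dotv v w.
Proof. by rewrite dotvC dotvBl !(dotvC v). Qed.

Lemma dotvZr c v u : dotv v (c *: u) = c * dotv v u.
Proof. by rewrite dotvC dotvZl dotvC. Qed.

Lemma dotv_sumZl n (P : pred 'I_n) (g : 'I_n -> R) (x : 'I_n -> 'rV[R]_d) v :
  dotv (\sum_(k | P k) g k *: x k) v = \sum_(k | P k) g k * dotv (x k) v.
Proof.
rewrite (big_morph (fun u => dotv u v) (fun u w => dotvDl u w v) (dotv0l v)).
by apply: eq_bigr => k _; rewrite dotvZl.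
Qed.

Lemma dotv_sumZr n (P : pred 'I_n) (g : 'I_n -> R) (x : 'I_n -> 'rV[R]_d) v :
  dotv v (\sum_(k | P k) g k *: x k) = \sum_(k | P k) g k * dotv v (x k).
Proof. by rewrite dotvC dotv_sumZl; under eq_bigr do rewrite dotvC. Qed.

Lemma dotvv_ge0 u : 0 <= dotv u u.
Proof. by rewrite dotvE sumr_ge0 // => i _; rewrite -expr2 sqr_ge0. Qed.

Lemma dotvv_eq0 u : (dotv u u == 0) = (u == 0).
Proof.
apply/idP/eqP => [|->]; last by rewrite dotv0l.
rewrite dotvE psumr_eq0 => [/allP u0|i _]; last by rewrite -expr2 sqr_ge0.
apply/matrixP => i j; rewrite mxE (ord1 i).
by have := u0 j (mem_index_enum _); rewrite -expr2 sqrf_eq0 => /eqP.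
Qed.

Lemma dotvvB u v : dotv (u - v) (u - v) = dotv u u - 2 * dotv u v + dotv v v.
Proof. rewrite !dotvBl !dotvBr (dotvC v u); lra. Qed.

Lemma dotvv_convex_le n (nu : 'I_n -> R) (x : 'I_n -> 'rV[R]_d) :
  (forall j, 0 <= nu j) -> \sum_j nu j = 1 ->
  dotv (\sum_j nu j *: x j) (\sum_j nu j *: x j) <=
  \sum_j nu j * dotv (x j) (x j).
Proof.
move=> nu0 nu1; set m := \sum_j nu j *: x j.
have : 0 <= \sum_j nu j * dotv (x j - m) (x j - m).
  by apply: sumr_ge0 => j _; rewrite mulr_ge0 ?dotvv_ge0.
have -> : \sum_j nu j * dotv (x j - m) (x j - m) =
          \sum_j nu j * dotv (x j) (x j) - 2 * dotv m m + dotv m m.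
  under eq_bigr do rewrite dotvvB !mulrDr mulrN.
  rewrite !big_split /= sumrN -mulr_suml nu1 mul1r; congr (_ - _ + _).
  by rewrite {2}/m dotv_sumZl mulr_sumr; apply: eq_bigr => j _; rewrite mulrCA.
lra.
Qed.

Lemma ltr_normv u v : (normv u < normv v) = (dotv u u < dotv v v).
Proof. by rewrite /normv !ltNge ler_sqrt ?dotvv_ge0. Qed.

End Dot.

Section ConeResidual.
Variables (R : realType) (d : nat).
Local Notation vec := 'rV[R]_d.

(* p = eta - P_C eta for the cone C generated by the al k, stated through the
   optimality (KKT) conditions of the projection. *)
Definition cone_residual K (al : 'I_K -> vec) (eta p : vec) : Prop :=
  exists2 g : 'I_K -> R, forall k, 0 <= g k &
    [/\ p = eta - \sum_k g k *: al k,
        forall k, dotv (al k) p <= 0 &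
        dotv p (\sum_k g k *: al k) = 0].

Lemma cone_residual_min K (al : 'I_K -> vec) eta p (b : 'I_K -> R) :
  cone_residual al eta p -> (forall k, 0 <= b k) ->
  dotv p p <= dotv (eta - \sum_k b k *: al k) (eta - \sum_k b k *: al k).
Proof.
case=> g _ [Ep al_p p_g] b0.
have -> : eta - \sum_k b k *: al k =
          p - (\sum_k b k *: al k - \sum_k g k *: al k).
  by rewrite Ep opprB addrA subrK.
have p_b : dotv p (\sum_k b k *: al k) <= 0.
  by rewrite dotv_sumZr sumr_le0 // => k _; rewrite mulr_ge0_le0 // dotvC.
rewrite dotvvB dotvBr p_g.
have := dotvv_ge0 (\sum_k b k *: al k - \sum_k g k *: al k); lra.
Qed.

Lemma cone_residual_firm K (al : 'I_K -> vec) x y p q :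
  cone_residual al x p -> cone_residual al y q ->
  dotv (p - q) (p - q) <= dotv (x - y) (p - q).
Proof.
have split_x x' p' q' : cone_residual al x' p' ->
    (forall k, dotv (al k) q' <= 0) ->
    dotv p' p' = dotv x' p' /\ dotv x' q' <= dotv p' q'.
  case=> g g0 [Ep _ p_g] al_q; have Ex : x' = p' + \sum_k g k *: al k.
    by rewrite Ep subrK.
  rewrite Ex !dotvDl (dotvC _ p') p_g addr0; split=> //.
  by rewrite gerDl dotv_sumZl sumr_le0 // => k _; rewrite mulr_ge0_le0.
move=> /[dup] Hp [_ _ [_ al_p _]] /[dup] Hq [_ _ [_ al_q _]].
have [pp xq] := split_x _ _ q Hp al_q; have [qq yp] := split_x _ _ p Hq al_p.
move: yp; rewrite dotvvB dotvBl !dotvBr (dotvC q p); lra.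
Qed.

(* For b = 0 the division yields 0, so rejv 0 x = x. *)
Definition rejv (b x : vec) : vec := x - (dotv x b / dotv b b) *: b.

Lemma dotv_rejv b x : dotv b (rejv b x) = 0.
Proof.
have [->|b0] := eqVneq b 0; first by rewrite dotv0l.
by rewrite dotvBr dotvZr (dotvC b x) divfK ?subrr ?dotvv_eq0.
Qed.

Lemma dotv_rejvl b x q : dotv b q = 0 -> dotv (rejv b x) q = dotv x q.
Proof. by move=> bq; rewrite dotvBl dotvZl bq mulr0 subr0. Qed.

Lemma rejvB b x y : rejv b (x - y) = rejv b x - rejv b y.
Proof.
by rewrite /rejv dotvBl mulrBl scalerBl !opprB addrACA [- _ + _]addrC addrACA.
Qed.

Lemma rejv_sum n (g : 'I_n -> R) (x : 'I_n -> vec) b :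
  rejv b (\sum_k g k *: x k) = \sum_k g k *: rejv b (x k).
Proof.
rewrite /rejv dotv_sumZl mulr_suml scaler_suml -sumrB.
by apply: eq_bigr => k _; rewrite scalerBr scalerA mulrA.
Qed.

Lemma cone_residual_rejv K (al : 'I_K -> vec) b x q :
  cone_residual (fun k => rejv b (al k)) (rejv b x) q ->
  exists t, cone_residual al (x - t *: b) q /\ dotv b q = 0.
Proof.
case=> g g0 [Eq al_q q_g]; set r := x - \sum_k g k *: al k.
have Eqr : q = rejv b r by rewrite Eq /r rejvB rejv_sum.
have bq : dotv b q = 0 by rewrite Eqr dotv_rejv.
exists (dotv r b / dotv b b); split=> //; exists g => //; split.
- by rewrite Eqr /rejv /r addrAC.
- by move=> k; rewrite -(dotv_rejvl (al k) bq).
- by rewrite dotvC -(dotv_rejvl _ bq) rejv_sum dotvC.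
Qed.

Lemma cone_residual_recr K (al : 'I_K.+1 -> vec) eta p t :
  cone_residual (fun j => al (widen_ord (leqnSn K) j))
    (eta - t *: al ord_max) p ->
  0 <= t -> dotv (al ord_max) p <= 0 -> t * dotv (al ord_max) p = 0 ->
  cone_residual al eta p.
Proof.
case=> h h0 [Ep al_p p_h] t0 a_p p_a.
pose g k := if unlift ord_max k is Some j then h j else t.
have gw j : g (widen_ord (leqnSn K) j) = h j.
  have -> : widen_ord (leqnSn K) j = lift ord_max j.
    by apply: val_inj; rewrite [RHS]lift_max.
  by rewrite /g liftK.
have gm : g ord_max = t by rewrite /g unlift_none.
have Eg : \sum_k g k *: al k =
          \sum_j h j *: al (widen_ord (leqnSn K) j) + t *: al ord_max.
  by rewrite big_ord_recr gm; under eq_bigr do rewrite gw.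
exists g; first by apply: forall_ord_recr => [j|]; rewrite ?gw ?gm.
rewrite Eg; split.
- by rewrite Ep opprD addrA addrAC.
- exact: forall_ord_recr.
- by rewrite dotvDr p_h dotvZr add0r dotvC.
Qed.

Lemma cone_residual_exists K (al : 'I_K -> vec) eta :
  exists p, cone_residual al eta p.
Proof.
elim: K al eta => [|K IH] al eta.
  exists eta, (fun=> 0) => //.
  by rewrite big_ord0 subr0 dotvC dotv0l; split=> // -[].
set a := al ord_max; set al' := fun j => al (widen_ord (leqnSn K) j).
have [p Hp] := IH al' eta.
have [a_p|a_p] := lerP (dotv a p) 0.
  exists p; apply: (cone_residual_recr (t := 0)); rewrite ?mul0r //.
  by rewrite scale0r subr0.
have [q /cone_residual_rejv [t [Hq a_q]]] :=
  IH (fun j => rejv a (al' j)) (rejv a eta).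
exists q; have [t0|t_lt0] := lerP 0 t.
  by apply: (cone_residual_recr Hq t0); rewrite a_q ?mulr0.
(* A negative coefficient on a is impossible: firm non-expansiveness would
   make |p - q|^2 <= t (a . p) < 0. *)
have := cone_residual_firm Hp Hq.
rewrite opprB addrCA subrr addr0 dotvZl [in X in _ <= X]dotvBr a_q subr0.
have := dotvv_ge0 (p - q); have : t * dotv a p < 0 by rewrite nmulr_rlt0.
lra.
Qed.

Lemma is_canon_projP K (al : 'I_K -> vec) eta p :
  is_canon_proj al eta p <-> cone_residual al eta p.
Proof.
split.
  case=> S [gam [gam0 [[_ orthS] [Ep negS]]]].
  have al_p k : k \in S -> dotv (al k) p = 0 by rewrite Ep; exact: orthS.
  exists (fun k => if k \in S then gam k else 0) => [k|].
    by case: ifP => // /gam0.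
  have -> : \sum_k (if k \in S then gam k else 0) *: al k =
            \sum_(k in S) gam k *: al k.
    by rewrite [RHS]big_mkcond; apply: eq_bigr => k _; case: ifP; rewrite ?scale0r.
  split=> // [k|].
    by have [/al_p ->|/negS/ltW] := boolP (k \in S).
  by rewrite dotv_sumZr big1 // => k /al_p; rewrite dotvC => ->; rewrite mulr0.
case=> g g0 [Ep al_p p_g].
have slack k : g k * dotv (al k) p = 0.
  have nonneg i : true -> 0 <= - (g i * dotv p (al i)).
    by rewrite oppr_ge0 mulr_ge0_le0 // dotvC.
  apply/eqP; rewrite dotvC -oppr_eq0; apply/eqP; apply: (psumr_eq0P nonneg) => //.
  by rewrite sumrN -dotv_sumZr p_g oppr0.
set S := [set k | dotv (al k) p == 0].
have gS : \sum_(k in S) g k *: al k = \sum_k g k *: al k.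
  rewrite big_mkcond; apply: eq_bigr => k _; rewrite inE; case: eqP => // /eqP nz.
  by move/eqP: (slack k); rewrite mulf_eq0 (negPf nz) orbF => /eqP ->; rewrite scale0r.
exists S, g; rewrite gS; split=> [k _ //|]; split; first split.
- by exists g; rewrite gS.
- by move=> k; rewrite inE -Ep => /eqP.
- by split=> // k; rewrite inE lt_neqAle al_p andbT.
Qed.

Lemma canon_projP K (al : 'I_K -> vec) eta :
  cone_residual al eta (canon_proj al eta).
Proof.
rewrite /canon_proj; case: eqP => [->|_].
  exists (fun=> 0) => //; rewrite big1 ?subr0 => [|k _]; last exact: scale0r.
  by split=> // [k|]; rewrite ?dotv0l // dotvC dotv0l.
have [p /is_canon_projP Hp] := cone_residual_exists al eta.
apply/is_canon_projP; exact: (xgetPex 0 (ex_intro _ p Hp)).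
Qed.

End ConeResidual.

Lemma in_hull_vertex (R : realType) d J (etas : 'I_J -> 'rV[R]_d) j :
  in_hull etas (etas j).
Proof.
have delta0 i : i != j -> (i == j)%:R = 0 :> R by move/negPf ->.
have delta1 : \sum_i (i == j)%:R = 1 :> R.
  by rewrite (bigD1 j) //= eqxx big1 ?addr0.
exists (fun i => (i == j)%:R); split; last by rewrite (convex_comb_vertex _ delta0).
by move=> i; case: eqP; rewrite ?lexx ?ler01.
Qed.

Theorem proposition5 (R : realType) (d K J : nat)
    (alpha : 'I_K -> 'rV[R]_d) (etas : 'I_J.+1 -> 'rV[R]_d) :
  (forall k, alpha k != 0) ->
  (forall j, j != ord0 ->
     normv (canon_proj alpha (etas j)) < normv (canon_proj alpha (etas ord0))) ->
  in_hull etas (etas ord0) /\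
  (forall eta, in_hull etas eta -> eta != etas ord0 ->
     normv (canon_proj alpha eta) < normv (canon_proj alpha (etas ord0))).
Proof.
move=> _ pi_lt; split=> [|_ [nu [nu01 [nu1 ->]]] eta_ne]; first exact: in_hull_vertex.
have nu0 j : 0 <= nu j by case/andP: (nu01 j).
have [j j_ne nuj] : exists2 j, j != ord0 & nu j != 0.
  case: (pselect (exists2 j, j != ord0 & nu j != 0)) => // nu_vertex.
  move/eqP: eta_ne; elim; apply: convex_comb_vertex nu1 => j j_ne.
  by apply/eqP/negPn/negP => nuj; apply: nu_vertex; exists j.
have /choice [g Hg] i : exists g : 'I_K -> R, (forall k, 0 <= g k) /\
    canon_proj alpha (etas i) = etas i - \sum_k g k *: alpha k.
  by have [g g0 [Ep _ _]] := canon_projP alpha (etas i); exists g.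
have comb : \sum_j nu j *: etas j - \sum_k (\sum_j nu j * g j k) *: alpha k =
            \sum_j nu j *: canon_proj alpha (etas j).
  by rewrite -sumZ_subr_cone; apply: eq_bigr => i _; rewrite (proj2 (Hg i)).
rewrite ltr_normv.
have g_comb0 k : 0 <= \sum_i nu i * g i k.
  by apply: sumr_ge0 => i _; rewrite mulr_ge0 ?(proj1 (Hg i)).
have := cone_residual_min (canon_projP alpha (\sum_j nu j *: etas j)) g_comb0.
rewrite comb => /le_lt_trans; apply.
apply: le_lt_trans (dotvv_convex_le _ nu0 nu1) _.
by apply: (convex_comb_lt nu0 nu1 _ j_ne nuj) => i /pi_lt; rewrite ltr_normv.
Qed.
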